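(* Let $f:2^{[n]}\to\mathbb{R}$ be submodular with $f(\emptyset)=0$. Let $x\in[0,1]^n$ and $d\in\mathbb{R}^n_{\ge 0}$, and let $S=\{i: d_i\neq 0\}$. If $y=x+d\in[0,1]^n$, then $g(y)_i\le g(x)_i$ for all $i\notin S$. If instead $y=x-d\in[0,1]^n$, then $g(y)_i\ge g(x)_i$ for all $i\notin S$.
   Context: Notation: $[n]=\{1,\dots,n\}$. For a permutation $P=(P_1,\dots,P_n)$ of $[n]$, write $P[j]=\{P_1,\dots,P_j\}$ for $0\le j\le n$ (so $P[0]=\emptyset$). For $x\in\mathbb{R}^n$, the permutation $P_x$ consistent with $x$ is the permutation with $x_{P_1}\ge x_{P_2}\ge\dots\ge x_{P_n}$, ties broken lexicographically (among equal coordinates, the smaller index comes first). The Lovász subgradient of $f$ at $x\in[0,1]^n$ is the vector $g(x)\in\mathbb{R}^n$ defined by $g(x)_{P_k}=f(P[k])-f(P[k-1])$ for $k\in[n]$, where $P=P_x$. *)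

From HB Require Import structures.
From mathcomp Require Import all_boot all_order all_algebra.
Set Implicit Arguments. Unset Strict Implicit. Unset Printing Implicit Defensive.
Import Order.TTheory GRing.Theory Num.Theory.
Local Open Scope ring_scope.

(* Ground set [n] is represented by 'I_n = {0,..,n-1}; 2^[n] by {set 'I_n}. *)

Definition submodular (R : numDomainType) (n : nat) (f : {set 'I_n} -> R) :=
  forall A B : {set 'I_n}, f (A :|: B) + f (A :&: B) <= f A + f B.

Definition in_unit_cube (R : numDomainType) (n : nat) (x : 'I_n -> R) :=
  forall i, 0 <= x i <= 1.

(* Order used for P_x: j comes before k iff x_j > x_k, or x_j = x_k and j <= k
   (ties broken lexicographically: smaller index first). *)
Definition before (R : numDomainType) (n : nat) (x : 'I_n -> R) : rel 'I_n :=
  fun j k => (x k < x j) || ((x j == x k) && (j <= k)%N).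

(* The permutation P_x consistent with x, as the sequence (P_1, ..., P_n). *)
Definition perm_of (R : numDomainType) (n : nat) (x : 'I_n -> R) : seq 'I_n :=
  sort (before x) (enum 'I_n).

Definition prefix_set (n : nat) (P : seq 'I_n) (j : nat) : {set 'I_n} :=
  [set i in take j P].

(* Lovász subgradient: g(x)_{P_k} = f(P[k]) - f(P[k-1]); with 0-based position
   p = index i P of i, i = P_{p+1}, so g(x)_i = f(P[p+1]) - f(P[p]). *)
Definition lovasz_subgrad (R : numDomainType) (n : nat) (f : {set 'I_n} -> R)
    (x : 'I_n -> R) (i : 'I_n) : R :=
  let P := perm_of x in
  let p := index i P in
  f (prefix_set P p.+1) - f (prefix_set P p).

Definition support_set (R : numDomainType) (n : nat) (d : 'I_n -> R) : {set 'I_n} :=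
  [set i | d i != 0].

From HB Require Import structures.
From mathcomp Require Import all_boot all_order all_algebra.
Import Order.TTheory GRing.Theory Num.Theory.
Local Open Scope ring_scope.

(* The prefix preceding [i] in [P_x] is the set of indices [j <> i] that come
   before [i] in the order defining [P_x], so [g(x)_i] is the marginal value of
   [i] over that set. Raising other coordinates while [x_i] stays put can only
   enlarge this set, and by submodularity marginal values shrink on larger
   sets. Lowering the other coordinates is the same situation read backwards,
   from [x - d] up to [x]. *)

Section BeforeOrder.
Variables (R : numDomainType) (n : nat) (x : 'I_n -> R).

Lemma before_refl : reflexive (before x).
Proof. by move=> j; rewrite /before eqxx leqnn orbT. Qed.

Lemma before_trans : transitive (before x).
Proof.
move=> k j l; rewrite /before.
move=> /orP[h1|/andP[/eqP e1 h1]] /orP[h2|/andP[/eqP e2 h2]].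
- by rewrite (lt_trans h2 h1).
- by rewrite -e2 h1.
- by rewrite e1 h2.
- by rewrite e1 e2 eqxx (leq_trans h1 h2) orbT.
Qed.

Lemma before_antisym : antisymmetric (before x).
Proof.
move=> j k /andP[]; rewrite /before.
move=> /orP[h1|/andP[/eqP e1 h1]] /orP[h2|/andP[/eqP e2 h2]].
- by move: (lt_trans h1 h2); rewrite ltxx.
- by move: h1; rewrite e2 ltxx.
- by move: h2; rewrite e1 ltxx.
- by apply: val_inj; apply/eqP; rewrite eqn_leq h1 h2.
Qed.

End BeforeOrder.

Lemma before_total (R : realDomainType) (n : nat) (x : 'I_n -> R) :
  total (before x).
Proof.
move=> j k; rewrite /before; case: (ltgtP (x k) (x j)) => //= _.
exact: leq_total.
Qed.

Section PermOf.
Variables (R : realDomainType) (n : nat) (x : 'I_n -> R).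

Lemma mem_perm_of j : j \in perm_of x.
Proof. by rewrite mem_sort mem_enum. Qed.

Lemma index_perm_of_lt i j :
  (index j (perm_of x) < index i (perm_of x))%N = (j != i) && before x j i.
Proof.
have sorted_P : sorted (before x) (perm_of x).
  exact/sort_sorted/before_total.
have [lt_ji | le_ij] := ltnP.
  rewrite (sorted_ltn_index (@before_trans _ _ x) sorted_P) ?mem_perm_of //.
  by rewrite andbT; apply/esym; apply: contraTneq lt_ji => ->; rewrite ltnn.
have le_before : before x i j.
  by apply: (sorted_leq_index (@before_trans _ _ x) (@before_refl _ _ x) sorted_P);
    rewrite ?mem_perm_of.
apply/esym/negbTE/andP => -[ne_ji before_ji].
by case/eqP: ne_ji; apply: (@before_antisym _ _ x); rewrite before_ji.
Qed.

Lemma lovasz_subgradE (f : {set 'I_n} -> R) i :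
  let A := [set j | (j != i) && before x j i] in
  lovasz_subgrad f x i = f (i |: A) - f A.
Proof.
rewrite /lovasz_subgrad /prefix_set; congr (f _ - f _); apply/setP => j;
  rewrite !inE in_take ?mem_perm_of // -?index_perm_of_lt //.
rewrite ltnS leq_eqVlt; case: (j =P i) => [->|ne_ji]; first by rewrite eqxx.
rewrite (inj_in_eq (@index_inj _ j (perm_of x))) ?mem_perm_of //.
by move/eqP/negbTE: ne_ji => ->.
Qed.

End PermOf.

Lemma submodular_marginal_le (R : numDomainType) (n : nat)
    (f : {set 'I_n} -> R) (A B : {set 'I_n}) (i : 'I_n) :
  submodular f -> A \subset B -> i \notin B ->
  f (i |: B) - f B <= f (i |: A) - f A.
Proof.
move=> fsub subAB iNB; have := fsub (i |: A) B.
have -> : (i |: A) :|: B = i |: B by rewrite -setUA (setUidPr subAB).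
have -> : (i |: A) :&: B = A.
  have /eqP iB0 : [set i] :&: B == set0 by rewrite setI_eq0 disjoints1.
  by rewrite setIUl iB0 set0U (setIidPl subAB).
by rewrite lerBlDr addrAC lerBrDr addrC.
Qed.

Lemma before_mono (R : numDomainType) (n : nat) (x y : 'I_n -> R) (i j : 'I_n) :
  (forall k, x k <= y k) -> y i = x i -> before x j i -> before y j i.
Proof.
rewrite /before => le_xy yi_xi /orP[lt_ij|/andP[/eqP xj_xi le_ji]].
  by rewrite yi_xi (lt_le_trans lt_ij).
rewrite yi_xi -xj_xi; have := le_xy j; rewrite le_eqVlt => /orP[/eqP->|->] //.
by rewrite eqxx le_ji orbT.
Qed.

Lemma lovasz_subgrad_antimono (R : realDomainType) (n : nat)
    (f : {set 'I_n} -> R) (x y : 'I_n -> R) (i : 'I_n) :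
  submodular f -> (forall k, x k <= y k) -> y i = x i ->
  lovasz_subgrad f y i <= lovasz_subgrad f x i.
Proof.
move=> fsub le_xy yi_xi; rewrite !lovasz_subgradE.
apply: submodular_marginal_le => //; last by rewrite inE eqxx.
apply/subsetP => j; rewrite !inE => /andP[-> /before_mono]; exact.
Qed.

Theorem lemma3p3 (R : realFieldType) (n : nat) (f : {set 'I_n} -> R)
    (hsub : submodular f) (hf0 : f set0 = 0)
    (x d : 'I_n -> R) (hx : in_unit_cube x) (hd : forall i, 0 <= d i) :
  (in_unit_cube (fun i => x i + d i) ->
     forall i, i \notin support_set d ->
       lovasz_subgrad f (fun j => x j + d j) i <= lovasz_subgrad f x i) /\
  (in_unit_cube (fun i => x i - d i) ->
     forall i, i \notin support_set d ->
       lovasz_subgrad f x i <= lovasz_subgrad f (fun j => x j - d j) i).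
Proof.
split=> _ i; rewrite inE negbK => /eqP di0;
  apply: lovasz_subgrad_antimono => // [k|];
  by rewrite ?di0 ?addr0 ?subr0 ?lerDl ?gerBl.
Qed.
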